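(* Let $X$ be a real Banach space and $T:X\rightrightarrows X^*$ a maximal monotone operator. If $D(T)$ is bounded, then $\mathrm{conv}\,R(T)$ is weak-$*$ dense in $X^*$.
   Context: An operator $T:X\rightrightarrows X^*$ is a subset of $X\times X^*$, with domain $D(T)=\{x\;|\;\exists x^*,(x,x^* )\in T\}$ and range $R(T)=\{x^*\;|\;\exists x,(x,x^* )\in T\}$. $T$ is monotone if $\langle x-y,x^*-y^*\rangle\geq0$ for all $(x,x^* ),(y,y^* )\in T$, and maximal monotone if it is monotone and not properly contained in another monotone operator. $\mathrm{conv}$ denotes convex hull. *)

From mathcomp Require Import all_boot all_order all_algebra.
From mathcomp Require Import all_classical all_reals all_analysis.
Set Implicit Arguments. Unset Strict Implicit. Unset Printing Implicit Defensive.
Import Order.TTheory GRing.Theory Num.Theory.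
Import numFieldNormedType.Exports.
Local Open Scope ring_scope.
Local Open Scope classical_set_scope.

Section MaxMono.
Variables (R : realType) (X : normedModType R).

(* X^* : the continuous linear functionals X -> R; the pairing <x, f> is f x. *)
Definition is_dual (f : X -> R) : Prop :=
  (forall (a : R) (x y : X), f (a *: x + y) = a * f x + f y) /\ continuous f.

(* An operator T : X ⇉ X^* is a subset of X × X^*. *)
Definition operator_in (T : set (X * (X -> R))) : Prop :=
  forall p, T p -> is_dual p.2.

Definition dom (T : set (X * (X -> R))) : set X := [set x | exists f, T (x, f)].
Definition ran (T : set (X * (X -> R))) : set (X -> R) := [set f | exists x, T (x, f)].

Definition monotone_op (T : set (X * (X -> R))) : Prop :=
  forall p q, T p -> T q -> 0 <= p.2 p.1 - p.2 q.1 - (q.2 p.1 - q.2 q.1).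

Definition maximal_monotone (T : set (X * (X -> R))) : Prop :=
  operator_in T /\ monotone_op T /\
  forall S : set (X * (X -> R)), operator_in S -> monotone_op S -> T `<=` S -> S = T.


Definition conv_hull (A : set (X -> R)) : set (X -> R) :=
  [set g | exists (n : nat) (w : 'I_n -> R) (f : 'I_n -> X -> R),
     (forall i, 0 <= w i) /\ \sum_(i < n) w i = 1 /\ (forall i, A (f i)) /\
     g = (fun x => \sum_(i < n) w i * f i x)].

(* weak-* density in X^*: every basic weak-* neighbourhood
   { h in X^* | |h x_j - g x_j| < eps, j < m } of every g in X^* meets A *)
Definition weak_star_dense (A : set (X -> R)) : Prop :=
  forall g : X -> R, is_dual g ->
  forall (m : nat) (xs : 'I_m -> X) (eps : R), 0 < eps ->
  exists h, A h /\ is_dual h /\ forall j, `|h (xs j) - g (xs j)| < eps.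

End MaxMono.

(* Fix [g] in [X^*] and points [x_1, ..., x_m], and put
   [e f = (f x_j - g x_j)_j] in [R^m] for [f] in [R(T)].  If a vector [v] had
   [<v, e f> <= 0] on [R(T)], strictly for some [f], then [z = sum_j v_j x_j]
   would satisfy [f z <= g z] on [R(T)], strictly somewhere.  This is
   impossible: when [D(T)] is bounded, [f z > phi z - eps] for some [f] in
   [R(T)], whatever [phi] in [X^*] and [eps > 0], as otherwise a point
   [(a + t z, phi)] with [t] large is monotonically related to [T] and hence
   in [T] by maximality; take [phi = 2 g - f] and [eps = g z - f z].  So
   every such [v] vanishes on [e (R(T))], and a finite-dimensional theorem of
   the alternative, proved by induction on [m] (pairing points with first
   coordinates of opposite signs), puts [0] in the convex hull of [e (R(T))]:
   a convex combination of elements of [R(T)] agrees with [g] at every [x_j]. *)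

From mathcomp Require Import all_boot all_order all_algebra.
From mathcomp Require Import all_classical all_reals all_analysis.
From mathcomp Require Import ring lra.
Import Order.TTheory GRing.Theory Num.Theory.
Local Open Scope ring_scope.
Local Open Scope classical_set_scope.
Set Implicit Arguments. Unset Strict Implicit.

Section Alternative.
Variable R : realType.

Definition dotv m (v u : 'I_m -> R) : R := \sum_j v j * u j.

Definition vcons m (c : R) (v : 'I_m -> R) (j : 'I_m.+1) : R :=
  if unlift ord0 j is Some k then v k else c.

Lemma dotv_vcons m c (v : 'I_m -> R) (u : 'I_m.+1 -> R) :
  dotv (vcons c v) u = c * u ord0 + dotv v (fun k => u (lift ord0 k)).
Proof.
by rewrite /dotv big_ord_recl /vcons unlift_none; under eq_bigr do rewrite liftK.
Qed.

Lemma fun_ordS_eq0 m (u : 'I_m.+1 -> R) :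
  u ord0 = 0 -> (forall k, u (lift ord0 k) = 0) -> forall j, u j = 0.
Proof. by move=> u0 uS j; case: (unliftP ord0 j) => [k ->|->]. Qed.

(* The weight [balance a b] puts the segment from [a >= 0] to [b <= 0] at [0]. *)
Definition balance (a b : R) : R := if a == b then 1 else b / (b - a).

Lemma balanceP (a b : R) : b <= 0 <= a ->
  [/\ 0 <= balance a b, 0 <= 1 - balance a b &
      balance a b * a + (1 - balance a b) * b = 0].
Proof.
move=> /andP[b_le0 a_ge0]; rewrite /balance.
have [eq_ab|neq_ab] := eqVneq a b.
  have a0 : a = 0 by apply/eqP; rewrite eq_le a_ge0 eq_ab b_le0.
  by rewrite -eq_ab a0 subrr !mulr0 addr0 ler01 lexx.
have ba_lt0 : b - a < 0.
  by rewrite subr_lt0 lt_neqAle eq_sym neq_ab (le_trans b_le0).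
have ba_neq0 : b - a != 0 by rewrite lt_eqF.
split.
- by rewrite mulr_le0 // invr_le0 ltW.
- have -> : 1 - b / (b - a) = - a / (b - a) by field.
  by rewrite mulr_le0 ?oppr_le0 // invr_le0 ltW.
- by field.
Qed.

Lemma ratio_le_of_balance (a b da db : R) : b < 0 < a ->
  balance a b * da + (1 - balance a b) * db <= 0 -> db / - b <= - da / a.
Proof.
move=> /andP[b_lt0 a_gt0]; rewrite /balance gt_eqF ?(lt_trans b_lt0) //.
have ab_gt0 : 0 < a - b by lra.
have -> : b / (b - a) * da + (1 - b / (b - a)) * db = (- b * da + a * db) / (a - b).
  by field; rewrite gt_eqF // -opprB oppr_eq0 gt_eqF.
rewrite pmulr_lle0 ?invr_gt0 // => le0.
rewrite ler_pdivrMr ?oppr_gt0 // mulrAC ler_pdivlMr //; nra.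
Qed.

Lemma exists_affine_majorant (A : Type) (S : set A) (d h : A -> R) :
  (exists2 a, S a & 0 < h a) -> (exists2 b, S b & h b < 0) ->
  (forall x y, S x -> S y -> 0 <= h x -> h y <= 0 ->
     balance (h x) (h y) * d x + (1 - balance (h x) (h y)) * d y <= 0) ->
  exists lam, forall u, S u -> d u + lam * h u <= 0.
Proof.
move=> [a Sa ha] [b Sb hb] Hpair.
have ratio_le x y : S x -> S y -> 0 < h x -> h y < 0 -> d y / - h y <= - d x / h x.
  by move=> Sx Sy hx hy; apply: ratio_le_of_balance; rewrite ?hx ?hy // Hpair ?ltW.
pose E := [set d y / - h y | y in [set y | S y /\ h y < 0]].
have E_ub x : S x -> 0 < h x -> ubound E (- d x / h x).
  by move=> Sx hx _ [y [Sy hy] <-]; exact: ratio_le.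
have E_sup : has_sup E.
  by split; [exists (d b / - h b); exists b | exists (- d a / h a); exact: E_ub].
exists (sup E) => u Su; case: (ltgtP (h u) 0) => hu.
- have : d u / - h u <= sup E by apply: sup_upper_bound => //; exists u.
  rewrite ler_pdivrMr ?oppr_gt0 //; nra.
- have : sup E <= - d u / h u by apply: ge_sup E_sup.1 _; exact: E_ub.
  rewrite ler_pdivlMr //; nra.
- have := Hpair u u Su Su; rewrite hu lexx /balance eqxx subrr mul0r mul1r addr0 mulr0.
  by rewrite addr0; apply.
Qed.

Definition nonpos_vanish m (A : Type) (S : set A) (e : A -> 'I_m -> R) :=
  forall v, (forall a, S a -> dotv v (e a) <= 0) -> forall a, S a -> dotv v (e a) = 0.

Definition zero_in_conv m (A : Type) (S : set A) (e : A -> 'I_m -> R) :=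
  exists (I : finType) (w : I -> R) (p : I -> A),
    [/\ forall i, 0 <= w i, \sum_i w i = 1, forall i, S (p i)
      & forall j, \sum_i w i * e (p i) j = 0].

Section InductionStep.
Variables (m : nat) (A : Type) (S : set A) (e : A -> 'I_m.+1 -> R).

Local Notation hd a := (e a ord0).
Local Notation tl a := (fun k => e a (lift ord0 k)).

Lemma nonpos_vanish_tl : nonpos_vanish S e -> (forall a, S a -> hd a = 0) ->
  nonpos_vanish S (fun a => tl a).
Proof.
move=> He hd0 v Hv a Sa.
have := He (vcons 0 v) _ a Sa; rewrite dotv_vcons mul0r add0r; apply=> b Sb.
by rewrite dotv_vcons mul0r add0r; exact: Hv.
Qed.

Lemma zero_in_conv_tl : (forall a, S a -> hd a = 0) ->
  zero_in_conv S (fun a => tl a) -> zero_in_conv S e.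
Proof.
move=> hd0 [I [w [p [w_ge0 w_sum1 Sp p0]]]]; exists I, w, p; split=> //.
apply: fun_ordS_eq0 => [|k]; last exact: p0.
by rewrite big1 // => i _; rewrite hd0 ?mulr0.
Qed.

Lemma hd_signs : nonpos_vanish S e -> ~ (forall a, S a -> hd a = 0) ->
  (exists2 a, S a & 0 < hd a) /\ (exists2 b, S b & hd b < 0).
Proof.
move=> He hd_neq0.
have signed s : s != 0 -> ~ (forall a, S a -> s * hd a <= 0).
  move=> s_neq0 Hs; apply: hd_neq0 => a Sa.
  have dotv_s b : dotv (vcons s (fun=> 0)) (e b) = s * hd b.
    by rewrite dotv_vcons /dotv big1 ?addr0 // => k _; rewrite mul0r.
  have := He (vcons s (fun=> 0)) _ a Sa; rewrite dotv_s => /(_ _)/eqP.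
  by rewrite mulf_eq0 (negbTE s_neq0) => /(_ _)/eqP; apply=> b Sb; rewrite dotv_s Hs.
have N1_neq0 : (-1 : R) != 0 by rewrite oppr_eq0 oner_eq0.
split.
- apply: contra_notP (signed 1 (oner_neq0 _)) => Hpos a Sa.
  by rewrite mul1r leNgt; apply/negP => ha; apply: Hpos; exists a.
- apply: contra_notP (signed (-1) N1_neq0) => Hneg a Sa.
  by rewrite mulN1r oppr_le0 leNgt; apply/negP => ha; apply: Hneg; exists a.
Qed.

Definition straddle (p : A * A) := [/\ S p.1, S p.2, 0 <= hd p.1 & hd p.2 <= 0].

Local Notation bal p := (balance (hd p.1) (hd p.2)).

(* The tail of the convex combination of [e p.1] and [e p.2] whose head vanishes. *)
Definition mix (p : A * A) (k : 'I_m) :=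
  bal p * e p.1 (lift ord0 k) + (1 - bal p) * e p.2 (lift ord0 k).

Lemma nonpos_vanish_mix : nonpos_vanish S e ->
  (exists2 a, S a & 0 < hd a) -> (exists2 b, S b & hd b < 0) ->
  nonpos_vanish straddle mix.
Proof.
move=> He pos neg v Hv.
pose d a := dotv v (tl a).
have dotv_mix p : dotv v (mix p) = bal p * d p.1 + (1 - bal p) * d p.2.
  rewrite /d /dotv !mulr_sumr -big_split; apply: eq_bigr => k _.
  by rewrite /mix mulrDr !(mulrCA (v k)).
have [lam Hlam] : exists lam, forall u, S u -> d u + lam * hd u <= 0.
  apply: exists_affine_majorant pos neg _ => x y Sx Sy hx hy.
  by rewrite -(dotv_mix (x, y)); apply: Hv.
have d_eq u : S u -> d u = - (lam * hd u).
  move=> Su; apply/eqP; rewrite -addr_eq0 addrC.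
  have := He (vcons lam v) _ u Su; rewrite dotv_vcons => -> // b Sb.
  by rewrite dotv_vcons addrC; exact: Hlam.
move=> [x y] [/= Sx Sy hx hy]; rewrite dotv_mix /= !d_eq //.
have [_ _ bal0] := balanceP (introT andP (conj hy hx)).
by rewrite -(mulr0 (- lam)) -bal0; ring.
Qed.

Lemma zero_in_conv_mix : zero_in_conv straddle mix -> zero_in_conv S e.
Proof.
move=> [I [w [p [w_ge0 w_sum1 Sp p0]]]].
have bal_spec i := balanceP
  (let: And4 _ _ hx hy := Sp i in introT andP (conj hy hx)).
have sum_pair (F : I * bool -> R) :
    \sum_(ib : I * bool) F ib = \sum_i (F (i, true) + F (i, false)).
  rewrite (eq_bigr (fun ib => (fun i b => F (i, b)) ib.1 ib.2)); last by case.
  rewrite -(pair_bigA _ (fun i b => F (i, b))).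
  by apply: eq_bigr => i _; rewrite big_bool.
exists (I * bool)%type,
  (fun ib => w ib.1 * (if ib.2 then bal (p ib.1) else 1 - bal (p ib.1))),
  (fun ib => if ib.2 then (p ib.1).1 else (p ib.1).2).
split.
- move=> [i b]; have [b1 b2 _] := bal_spec i.
  by case: b; apply: mulr_ge0.
- by rewrite sum_pair -[RHS]w_sum1; apply: eq_bigr => i _ /=; ring.
- by move=> [i []]; case: (Sp i).
- apply: fun_ordS_eq0 => [|k]; rewrite sum_pair.
    rewrite big1 // => i _ /=; have [_ _ bal0] := bal_spec i.
    by rewrite -!mulrA -mulrDr bal0 mulr0.
  by rewrite -[RHS](p0 k); apply: eq_bigr => i _ /=; rewrite /mix; ring.
Qed.

End InductionStep.

Theorem zero_in_conv_of_nonpos_vanish m (A : Type) (S : set A) (e : A -> 'I_m -> R) :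
  (exists a, S a) -> nonpos_vanish S e -> zero_in_conv S e.
Proof.
elim: m A S e => [|m IH] A S e [a Sa] He.
  exists 'I_1, (fun=> 1), (fun=> a).
  by split=> //; [rewrite big_ord1 | case].
have [hd0|hd_neq0] := pselect (forall a, S a -> e a ord0 = 0).
  apply: zero_in_conv_tl => //; apply: IH; [by exists a | exact: nonpos_vanish_tl].
have [[x Sx hx] [y Sy hy]] := hd_signs He hd_neq0.
apply: zero_in_conv_mix; apply: IH.
  by exists (x, y); split; rewrite /= ?ltW.
by apply: nonpos_vanish_mix => //; [exists x | exists y].
Qed.

End Alternative.

Section Dual.
Variables (R : realType) (X : normedModType R).
Implicit Types (f g : X -> R) (x y : X).

Lemma dualD f : is_dual f -> forall x y, f (x + y) = f x + f y.
Proof. by move=> [lin_f _] x y; have := lin_f 1 x y; rewrite scale1r mul1r. Qed.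

Lemma dual0 f : is_dual f -> f 0 = 0.
Proof. by move=> df; apply: (addrI (f 0)); rewrite -dualD // !addr0. Qed.

Lemma dualZ f : is_dual f -> forall a x, f (a *: x) = a * f x.
Proof. by move=> df a x; rewrite -[a *: x]addr0 df.1 dual0 // addr0. Qed.

Lemma dualB f : is_dual f -> forall x y, f (x - y) = f x - f y.
Proof. by move=> df x y; rewrite dualD // -scaleN1r dualZ // mulN1r. Qed.

Lemma dual_sum f : is_dual f -> forall m (v : 'I_m -> R) (xs : 'I_m -> X),
  f (\sum_j v j *: xs j) = \sum_j v j * f (xs j).
Proof.
move=> df m v xs; rewrite (big_morph f (dualD df) (dual0 df)).
by apply: eq_bigr => j _; rewrite dualZ.
Qed.

Lemma dual_bounded f : is_dual f ->
  forall M, exists C : R, forall x, `|x| <= M -> `|f x| <= C.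
Proof.
move=> df M.
have := df.2 0; move/cvgr_dist_lt => /(_ 1 ltr01).
rewrite dual0 // => /nbhs_norm0P [d /= d0 hd].
have M1_gt0 : 0 < `|M| + 1 by rewrite ltr_pwDr.
pose c := d / (2 * (`|M| + 1)).
have c_gt0 : 0 < c by rewrite divr_gt0 // mulr_gt0.
exists c^-1 => x x_le.
have cx_lt : `|c *: x| < d.
  have cM : c * (`|M| + 1) = d / 2 by rewrite /c; field; rewrite gt_eqF.
  have : c * `|x| <= c * (`|M| + 1) by rewrite ler_wpM2l ?ltW //; have := ler_norm M; lra.
  rewrite normrZ gtr0_norm // cM; lra.
have := hd _ cx_lt; rewrite /= sub0r normrN dualZ // normrM gtr0_norm // => le1.
by rewrite -(ler_pM2l c_gt0) mulrV ?unitfE ?gt_eqF // ltW.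
Qed.

Lemma is_dual_cst0 : is_dual (fun _ : X => 0 : R).
Proof. by split=> [*|x]; [rewrite mulr0 addr0 | exact: (@cvg_cst R^o 0 X (nbhs x) _)]. Qed.

Lemma is_dual_comb a b f g : is_dual f -> is_dual g ->
  is_dual (fun x => a * f x + b * g x).
Proof.
move=> df dg; split=> [c x y|x]; first by rewrite df.1 dg.1; ring.
exact: continuousD (continuousM (@cvg_cst R^o a X (nbhs x) _) (df.2 x))
  (continuousM (@cvg_cst R^o b X (nbhs x) _) (dg.2 x)).
Qed.

Lemma is_dual_sum (I : finType) (w : I -> R) (f : I -> X -> R) :
  (forall i, is_dual (f i)) -> is_dual (fun x => \sum_i w i * f i x).
Proof.
move=> df; rewrite -(fct_sumE _ _ (fun i x => w i * f i x)).
apply: (big_ind (@is_dual R X)) => [|F G dF dG|i _].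
- exact: is_dual_cst0.
- have := is_dual_comb 1 1 dF dG; congr is_dual.
  by apply/funext => x; rewrite !mul1r.
- have := is_dual_comb (w i) 0 (df i) is_dual_cst0; congr is_dual.
  by apply/funext => x; rewrite mul0r addr0.
Qed.

End Dual.

Section MaximalMonotone.
Variables (R : realType) (X : normedModType R) (T : set (X * (X -> R))).
Hypothesis maxT : maximal_monotone T.

Lemma maximal_monotone_related y phi : is_dual phi ->
  (forall x f, T (x, f) -> 0 <= f x - f y - (phi x - phi y)) -> T (y, phi).
Proof.
move: maxT => [opT [monoT maxT']] dphi related.
suff <- : T `|` [set (y, phi)] = T by right.
apply: maxT' => [p [Tp|->] //|p q [Tp|->] [Tq|->]|p Tp]; last by left.
- exact: opT.
- exact: monoT.
- by case: p Tp => x f /related.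
- by case: q Tq => x f /related /=; lra.
- by rewrite /= !subrr.
Qed.

Lemma maximal_monotone_neq0 : T !=set0.
Proof.
apply: contrapT => /set0P/negP; rewrite negbK => /eqP T0.
suff : T (0, fun=> 0) by rewrite T0.
by apply: maximal_monotone_related => [|x f]; [exact: is_dual_cst0 | rewrite T0].
Qed.

Lemma ran_unbounded : bounded_set (dom T) ->
  forall z phi, is_dual phi -> forall eps, 0 < eps ->
  exists2 f, ran T f & phi z - eps < f z.
Proof.
move=> /ex_strict_bound_gt0 [M _ domM] z phi dphi eps eps_gt0.
have [[a fa] Ta] := maximal_monotone_neq0.
have dfa : is_dual fa := maxT.1 _ Ta.
have [C1 hC1] := dual_bounded dfa (M + M).
have [C2 hC2] := dual_bounded dphi (M + M).
apply: contrapT => no_f.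
pose t := (`|C1| + `|C2| + 1) / eps.
have t_gt0 : 0 < t by rewrite divr_gt0 // ltr_wpDl ?addr_ge0.
have t_eps : t * eps = `|C1| + `|C2| + 1.
  by rewrite /t mulrAC -mulrA divff ?mulr1 // gt_eqF.
suff Tphi : T (a + t *: z, phi) by apply: no_f; exists phi; [exists (a + t *: z) | lra].
apply: maximal_monotone_related => // x f Txf.
have df : is_dual f := maxT.1 _ Txf.
have fz_le : f z <= phi z - eps.
  by rewrite leNgt; apply/negP => fz_gt; apply: no_f; exists f => //; exists x.
have xa_le : `|x - a| <= M + M.
  rewrite (le_trans (ler_normB _ _)) // lerD // ltW // domM //; first by exists f.
  by exists fa.
have /ler_normlP[fa1 fa2] := le_trans (hC1 _ xa_le) (ler_norm C1).
have /ler_normlP[phi1 phi2] := le_trans (hC2 _ xa_le) (ler_norm C2).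
have mono := maxT.2.1 _ _ Txf Ta; rewrite /= in mono.
have := ler_wpM2l (ltW t_gt0) fz_le; rewrite mulrBr t_eps.
rewrite (dualB dfa) in fa1 fa2; rewrite (dualB dphi) in phi1 phi2.
rewrite (dualD df) (dualZ df) (dualD dphi) (dualZ dphi); lra.
Qed.

End MaximalMonotone.

Section WeakStarDensity.
Variables (R : realType) (X : normedModType R) (T : set (X * (X -> R))).
Hypotheses (maxT : maximal_monotone T) (bT : bounded_set (dom T)).

Lemma ran_exceeds z g f : is_dual g -> ran T f -> f z < g z ->
  exists2 f', ran T f' & g z < f' z.
Proof.
move=> dg [x Txf] fz_lt.
have df : is_dual f := maxT.1 _ Txf.
have gap : 0 < g z - f z by rewrite subr_gt0.
have [f' Tf' gt] := ran_unbounded maxT bT z (is_dual_comb 2 (-1) dg df) gap.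
by exists f' => //; lra.
Qed.

Lemma nonpos_vanish_ran g m (xs : 'I_m -> X) : is_dual g ->
  nonpos_vanish (ran T) (fun f j => f (xs j) - g (xs j)).
Proof.
move=> dg v Hv.
pose z := \sum_j v j *: xs j.
have dotv_z f : ran T f -> dotv v (fun j => f (xs j) - g (xs j)) = f z - g z.
  move=> [x Txf]; have df : is_dual f := maxT.1 _ Txf.
  rewrite /z /dotv (dual_sum df) (dual_sum dg) -sumrB.
  by apply: eq_bigr => j _; rewrite mulrBr.
move=> f Tf; rewrite dotv_z //; apply/eqP; rewrite subr_eq0 eq_le -subr_le0 -dotv_z ?Hv //=.
rewrite leNgt; apply/negP => fz_lt.
have [f' Tf' gt] := ran_exceeds dg Tf fz_lt.
by have := Hv f' Tf'; rewrite dotv_z //; lra.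
Qed.

End WeakStarDensity.

Lemma conv_hull_fin (R : realType) (X : normedModType R) (A : set (X -> R))
    (I : finType) (w : I -> R) (f : I -> X -> R) :
  (forall i, 0 <= w i) -> \sum_i w i = 1 -> (forall i, A (f i)) ->
  conv_hull A (fun x => \sum_i w i * f i x).
Proof.
move=> w_ge0 w_sum1 Af.
exists #|I|, (fun k => w (enum_val k)), (fun k => f (enum_val k)).
have sum_enum (F : I -> R) : \sum_(k < #|I|) F (enum_val k) = \sum_i F i.
  by rewrite -(big_enum_val (A := I)).
split=> //; split; first exact: etrans (sum_enum w) w_sum1.
by split=> //; apply/funext => x; rewrite -(sum_enum (fun i => w i * f i x)).
Qed.

Theorem corollary4p3 (R : realType) (X : completeNormedModType R)
  (T : set (X * (X -> R))) :
  maximal_monotone T -> bounded_set (dom T) -> weak_star_dense (conv_hull (ran T)).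
Proof.
move=> maxT bT g dg m xs eps eps_gt0.
have ran_neq0 : exists f, ran T f.
  by have [[a f] Taf] := maximal_monotone_neq0 maxT; exists f, a.
have [I [w [p [w_ge0 w_sum1 Tp p0]]]] :=
  zero_in_conv_of_nonpos_vanish ran_neq0 (nonpos_vanish_ran maxT bT (xs := xs) dg).
exists (fun x => \sum_i w i * p i x); split; first exact: conv_hull_fin.
split=> [|j].
  by apply: is_dual_sum => i; have [x Tx] := Tp i; exact: maxT.1 _ Tx.
suff -> : \sum_i w i * p i (xs j) - g (xs j) = 0 by rewrite normr0.
rewrite -[RHS](p0 j) -[X in _ - X]mul1r -w_sum1 mulr_suml -sumrB.
by apply: eq_bigr => i _; rewrite mulrBr.
Qed.
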